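(* Let $p > 3$ be a prime number. Then $p$ is a Cantor prime if and only if $p$ satisfies an equation of the form $2pK + 1 = 3^q$, where $q$ is the multiplicative order of $3$ modulo $p$ and $K$ is a sum of distinct powers $3^d$ with integer exponents $0 \le d < q$ (equivalently, $K = \sum_{i=1}^{n} 3^{d_i}$ for some $n \ge 1$ and distinct integers $0 \le d_i < q$).
   Context: The middle-third Cantor set $\mathcal{C}_3$ is the set of points of $[0,1]$ admitting a base-$3$ expansion $\sum_{k\ge 1} a_k 3^{-k}$ with every digit $a_k \in \{0,2\}$. A Cantor prime is a prime number $p$ such that $1/p \in \mathcal{C}_3$. *)

From Stdlib Require Import Reals ZArith Znumtheory List Arith Lia Lra.
Import ListNotations.
Open Scope R_scope.

(* x lies in the middle-third Cantor set: x = sum_{k>=1} a_k 3^{-k}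
   with every digit a_k in {0,2}.  Here [a k] is the digit a_{k+1}. *)
Definition in_cantor3 (x : R) : Prop :=
  exists a : nat -> nat,
    (forall k, a k = 0%nat \/ a k = 2%nat) /\
    infinite_sum (fun k => INR (a k) / 3 ^ (S k)) x.

Definition cantor_prime (p : nat) : Prop :=
  prime (Z.of_nat p) /\ in_cantor3 (/ INR p).

Definition mult_order (a p q : nat) : Prop :=
  (0 < q)%nat /\ (a ^ q mod p)%nat = 1%nat /\
  forall r, (0 < r < q)%nat -> (a ^ r mod p)%nat <> 1%nat.

Definition sum_distinct_pow3_below (K q : nat) : Prop :=
  exists ds : list nat,
    ds <> [] /\ NoDup ds /\ Forall (fun d => (d < q)%nat) ds /\
    K = fold_right (fun d acc => (3 ^ d + acc)%nat) 0%nat ds.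

(* If 1/p has Cantor digits a, the first q digits form an integer g with
   g/3^q <= 1/p <= (g+1)/3^q, i.e. p g <= 3^q <= p g + p; since 3^q = 1 mod p
   this forces 3^q = p g + 1, and g = 2K because its digits are 0 or 2.
   Conversely, repeating the q base-3 digits of 2K periodically gives the
   expansion of 2K/(3^q - 1) = 1/p. *)

From Stdlib Require Import Reals ZArith Znumtheory List Arith Lia Lra.
Import ListNotations.
Local Open Scope nat_scope.

Fixpoint base3 (a : nat -> nat) (n : nat) : nat :=
  match n with
  | 0 => 0
  | S n => 3 * base3 a n + a n
  end.

Definition pow3_sum (ds : list nat) : nat :=
  fold_right (fun d acc => 3 ^ d + acc) 0 ds.

Definition twos_at (ds : list nat) (d : nat) : nat :=
  if in_dec Nat.eq_dec d ds then 2 else 0.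

Lemma base3_ext a b n : (forall k, k < n -> a k = b k) -> base3 a n = base3 b n.
Proof.
  induction n as [|n IH]; intros Hab; simpl; auto.
  rewrite IH, Hab; [reflexivity | lia | intros; apply Hab; lia].
Qed.

Lemma base3_add a b n : base3 (fun k => a k + b k) n = base3 a n + base3 b n.
Proof. induction n as [|n IH]; simpl; lia. Qed.

Lemma base3_single j c n :
  base3 (fun k => if k =? j then c else 0) n =
  if j <? n then c * 3 ^ (n - 1 - j) else 0.
Proof.
  induction n as [|n IH]; simpl; auto.
  rewrite IH.
  destruct (Nat.ltb_spec j n); destruct (Nat.ltb_spec j (S n));
    destruct (Nat.eqb_spec n j); try lia.
  - replace (n - 0 - j) with (S (n - 1 - j)) by lia; simpl; lia.
  - subst; rewrite Nat.sub_0_r, Nat.sub_diag; simpl; lia.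
Qed.

Lemma base3_app a m n :
  base3 a (m + n) = base3 a m * 3 ^ n + base3 (fun k => a (m + k)) n.
Proof.
  induction n as [|n IH]; simpl.
  - rewrite Nat.add_0_r; lia.
  - rewrite Nat.add_succ_r; simpl; rewrite IH; lia.
Qed.

Lemma base3_twos_at_rev ds n :
  NoDup ds -> Forall (fun d => d < n) ds ->
  base3 (fun k => twos_at ds (n - 1 - k)) n = 2 * pow3_sum ds.
Proof.
  induction ds as [|x ds IH]; intros Hnd Hlt; simpl.
  - unfold twos_at; simpl; clear Hlt; induction n; simpl; lia.
  - inversion Hnd as [|? ? Hx Hnd']; inversion Hlt as [|? ? Hxn Hlt']; subst.
    transitivity
      (base3 (fun k => (if k =? n - 1 - x then 2 else 0) + twos_at ds (n - 1 - k)) n).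
    + apply base3_ext; intros k Hk; unfold twos_at; simpl.
      destruct (Nat.eqb_spec k (n - 1 - x));
        destruct (Nat.eq_dec x (n - 1 - k));
        destruct (in_dec Nat.eq_dec (n - 1 - k) ds); try subst k; try lia;
        first [ exfalso; apply Hx; congruence | tauto ].
    + rewrite base3_add, base3_single, IH by assumption.
      destruct (Nat.ltb_spec (n - 1 - x) n); try lia.
      replace (n - 1 - (n - 1 - x)) with x by lia; lia.
Qed.

Lemma base3_digits02 a n :
  (forall k, a k = 0 \/ a k = 2) ->
  exists ds, NoDup ds /\ Forall (fun d => d < n) ds /\ base3 a n = 2 * pow3_sum ds.
Proof.
  intros Ha.
  set (ds := filter (fun d => a (n - 1 - d) =? 2) (seq 0 n)).
  assert (Hlt : Forall (fun d => d < n) ds).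
  { apply Forall_forall; intros d Hd.
    apply filter_In, proj1, in_seq in Hd; lia. }
  exists ds; repeat split; auto.
  - apply NoDup_filter, seq_NoDup.
  - rewrite <- (base3_twos_at_rev ds n) by (auto; apply NoDup_filter, seq_NoDup).
    apply base3_ext; intros k Hk; unfold twos_at.
    destruct (in_dec Nat.eq_dec (n - 1 - k) ds) as [Hin|Hin].
    + apply filter_In, proj2, Nat.eqb_eq in Hin.
      replace (n - 1 - (n - 1 - k)) with k in Hin by lia; assumption.
    + destruct (Ha k) as [|Hk2]; auto.
      exfalso; apply Hin, filter_In; split.
      * apply in_seq; lia.
      * replace (n - 1 - (n - 1 - k)) with k by lia; apply Nat.eqb_eq, Hk2.
Qed.

Lemma base3_periodic a q m :
  (forall k, a (k + q) = a k) ->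
  base3 a (m * q) * 3 ^ q + base3 a q = base3 a (m * q) + base3 a q * 3 ^ (m * q).
Proof.
  intros Hper; induction m as [|m IH]; simpl; [lia|].
  rewrite base3_app, Nat.pow_add_r.
  rewrite (base3_ext (fun k => a (q + k)) a) by (intros k _; rewrite Nat.add_comm; apply Hper).
  nia.
Qed.

Lemma mod_eq_1_bracket p g t :
  p * g <= t <= p * g + p -> t mod p = 1 -> t = p * g + 1.
Proof.
  intros Ht Hmod.
  destruct p as [|[|p]]; [simpl in Hmod; lia | rewrite Nat.mod_1_r in Hmod; lia |].
  pose proof (Nat.div_mod_eq t (S (S p))) as Hdiv; rewrite Hmod in Hdiv.
  assert (t / S (S p) = g) by nia.
  lia.
Qed.

Local Open Scope R_scope.

Definition cantor_term (a : nat -> nat) (k : nat) : R := INR (a k) / 3 ^ S k.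

Definition trunc3 (a : nat -> nat) (n : nat) : R := INR (base3 a n) / 3 ^ n.

Lemma pow3_pos n : 0 < 3 ^ n.
Proof. apply pow_lt; lra. Qed.

Lemma INR_pow3 n : INR (3 ^ n) = 3 ^ n.
Proof. rewrite pow_INR; simpl; f_equal; lra. Qed.

Lemma trunc3_S a n : trunc3 a (S n) = trunc3 a n + INR (a n) / 3 ^ S n.
Proof.
  unfold trunc3; cbn [base3].
  rewrite plus_INR, mult_INR; simpl.
  pose proof (pow3_pos n); field; lra.
Qed.

Lemma sum_cantor_term a n : sum_f_R0 (cantor_term a) n = trunc3 a (S n).
Proof.
  induction n as [|n IH]; simpl sum_f_R0.
  - rewrite trunc3_S; unfold trunc3, cantor_term; simpl; field.
  - rewrite IH, (trunc3_S a (S n)); reflexivity.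
Qed.

Lemma infinite_sum_cantor_term a x :
  infinite_sum (cantor_term a) x <-> Un_cv (trunc3 a) x.
Proof.
  split; intros Hcv eps Heps; destruct (Hcv eps Heps) as [N HN].
  - exists (S N); intros [|n] Hn; [lia|].
    rewrite <- sum_cantor_term; apply HN; lia.
  - exists N; intros n Hn; rewrite sum_cantor_term; apply HN; lia.
Qed.

Lemma trunc3_growing a : Un_growing (trunc3 a).
Proof.
  intro n; rewrite trunc3_S.
  pose proof (pos_INR (a n)); pose proof (pow3_pos (S n)).
  assert (0 <= INR (a n) / 3 ^ S n)
    by (apply Rmult_le_pos; [lra | left; apply Rinv_0_lt_compat; lra]).
  lra.
Qed.

Lemma trunc3_upper_decreasing a :
  (forall k, (a k <= 2)%nat) -> Un_decreasing (fun n => trunc3 a n + / 3 ^ n).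
Proof.
  intros Ha n; rewrite trunc3_S.
  assert (INR (a n) <= 2) by (change 2 with (INR 2); apply le_INR, Ha).
  pose proof (pow3_pos n).
  assert (INR (a n) / 3 ^ S n + / 3 ^ S n <= / 3 ^ n).
  { simpl; apply (Rmult_le_reg_r (3 * 3 ^ n)); [lra|].
    field_simplify; lra. }
  lra.
Qed.

Lemma cv_inv_pow3 : Un_cv (fun n => / 3 ^ n) 0.
Proof.
  intros eps Heps.
  destruct (pow_lt_1_zero (/ 3) ltac:(rewrite Rabs_right; lra) eps Heps) as [N HN].
  exists N; intros n Hn; specialize (HN n Hn).
  unfold Rdist; rewrite Rminus_0_r, <- pow_inv; exact HN.
Qed.

Lemma trunc3_bounds a x n :
  (forall k, (a k <= 2)%nat) -> Un_cv (trunc3 a) x ->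
  trunc3 a n <= x <= trunc3 a n + / 3 ^ n.
Proof.
  intros Ha Hcv; split.
  - exact (growing_ineq _ _ (trunc3_growing a) Hcv n).
  - rewrite <- (Rplus_0_r x).
    exact (decreasing_ineq _ _ (trunc3_upper_decreasing a Ha)
             (CV_plus _ _ _ _ Hcv cv_inv_pow3) n).
Qed.

Lemma trunc3_periodic a q m :
  (0 < q)%nat -> (forall k, a (k + q)%nat = a k) ->
  trunc3 a (m * q) =
  INR (base3 a q) / (3 ^ q - 1) - INR (base3 a q) / (3 ^ q - 1) / 3 ^ (m * q).
Proof.
  intros Hq Hper.
  pose proof (f_equal INR (base3_periodic a q m Hper)) as E.
  rewrite !plus_INR, !mult_INR, !INR_pow3 in E.
  assert (1 < 3 ^ q) by (apply Rlt_pow_R1; lra || lia).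
  pose proof (pow3_pos (m * q)).
  unfold trunc3; apply (Rmult_eq_reg_r ((3 ^ q - 1) * 3 ^ (m * q)));
    [field_simplify; lra | nra].
Qed.

Lemma periodic_cantor_cv a q :
  (0 < q)%nat -> (forall k, a (k + q)%nat = a k) ->
  Un_cv (trunc3 a) (INR (base3 a q) / (3 ^ q - 1)).
Proof.
  intros Hq Hper.
  set (x := INR (base3 a q) / (3 ^ q - 1)).
  assert (Hx : 0 <= x).
  { assert (1 < 3 ^ q) by (apply Rlt_pow_R1; lra || lia).
    apply Rmult_le_pos; [apply pos_INR | left; apply Rinv_0_lt_compat; lra]. }
  assert (Hgap : forall m, x - trunc3 a (m * q) = x * / 3 ^ (m * q)).
  { intro m; unfold x; rewrite trunc3_periodic by assumption; unfold Rdiv; ring. }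
  assert (Hle : forall n, trunc3 a n <= x).
  { intro n.
    pose proof (tech9 _ (trunc3_growing a) n (n * q) ltac:(nia)).
    pose proof (Hgap n); pose proof (pow3_pos (n * q)).
    assert (0 <= x * / 3 ^ (n * q)) by (apply Rmult_le_pos; [lra | left; apply Rinv_0_lt_compat; lra]).
    lra. }
  intros eps Heps.
  destruct (cv_inv_pow3 (eps / (x + 1))) as [N HN]; [apply Rdiv_lt_0_compat; lra|].
  specialize (HN (N * q)%nat ltac:(nia)); unfold Rdist in HN.
  rewrite Rminus_0_r, Rabs_right in HN by (left; apply Rinv_0_lt_compat, pow3_pos).
  exists (N * q)%nat; intros n Hn; unfold Rdist.
  pose proof (tech9 _ (trunc3_growing a) _ _ Hn).
  pose proof (Hgap N); pose proof (Hle n); pose proof (pow3_pos (N * q)).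
  assert (x * / 3 ^ (N * q) < eps).
  { apply (Rmult_lt_compat_l (x + 1)) in HN; [|lra].
    replace ((x + 1) * (eps / (x + 1))) with eps in HN by (field; lra).
    assert (0 < / 3 ^ (N * q)) by (apply Rinv_0_lt_compat; lra). nra. }
  rewrite Rabs_minus_sym, Rabs_right; lra.
Qed.

Lemma trunc3_inv_bracket a p n :
  (0 < p)%nat -> trunc3 a n <= / INR p <= trunc3 a n + / 3 ^ n ->
  (p * base3 a n <= 3 ^ n <= p * base3 a n + p)%nat.
Proof.
  intros Hp [Hlo Hhi]; unfold trunc3 in *.
  assert (0 < INR p) by (apply lt_0_INR; lia).
  pose proof (pow3_pos n).
  split; apply INR_le; rewrite ?plus_INR, mult_INR, INR_pow3.
  - apply (Rmult_le_compat_r (INR p * 3 ^ n)) in Hlo; [|nra].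
    replace (INR (base3 a n) / 3 ^ n * (INR p * 3 ^ n)) with (INR p * INR (base3 a n)) in Hlo by (field; lra).
    replace (/ INR p * (INR p * 3 ^ n)) with (3 ^ n) in Hlo by (field; lra); exact Hlo.
  - apply (Rmult_le_compat_r (INR p * 3 ^ n)) in Hhi; [|nra].
    replace ((INR (base3 a n) / 3 ^ n + / 3 ^ n) * (INR p * 3 ^ n))
      with (INR p * INR (base3 a n) + INR p) in Hhi by (field; lra).
    replace (/ INR p * (INR p * 3 ^ n)) with (3 ^ n) in Hhi by (field; lra); exact Hhi.
Qed.

Lemma cantor_inv_block p q :
  (0 < q)%nat -> (3 ^ q mod p = 1)%nat -> in_cantor3 (/ INR p) ->
  exists ds, NoDup ds /\ Forall (fun d => d < q)%nat ds /\
    (3 ^ q = p * (2 * pow3_sum ds) + 1)%nat.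
Proof.
  intros Hq Hmod [a [Ha Hsum]].
  assert (Hp : (0 < p)%nat).
  { destruct p; [|lia].
    rewrite Nat.mod_0_r in Hmod; assert (1 < 3 ^ q)%nat by (apply Nat.pow_gt_1; lia); lia. }
  apply infinite_sum_cantor_term in Hsum.
  assert (Hbr := trunc3_inv_bracket a p q Hp
                   (trunc3_bounds a _ q ltac:(intro k; destruct (Ha k); lia) Hsum)).
  apply mod_eq_1_bracket in Hbr; [|exact Hmod].
  destruct (base3_digits02 a q Ha) as [ds [Hnd [Hlt Hds]]].
  exists ds; rewrite <- Hds; auto.
Qed.

Lemma cantor_inv_of_block p q ds :
  (0 < q)%nat -> NoDup ds -> Forall (fun d => d < q)%nat ds ->
  (3 ^ q = p * (2 * pow3_sum ds) + 1)%nat -> in_cantor3 (/ INR p).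
Proof.
  intros Hq Hnd Hlt Hblock3.
  set (a := fun k => twos_at ds (q - 1 - k mod q)).
  assert (Hblock : base3 a q = (2 * pow3_sum ds)%nat).
  { rewrite <- (base3_twos_at_rev ds q) by assumption.
    apply base3_ext; intros k Hk; unfold a; rewrite Nat.mod_small by lia; reflexivity. }
  exists a; split.
  - intro k; unfold a, twos_at; destruct in_dec; auto.
  - apply infinite_sum_cantor_term.
    replace (/ INR p) with (INR (base3 a q) / (3 ^ q - 1)).
    + apply periodic_cantor_cv; [lia|].
      intro k; unfold a; rewrite <- (Nat.Div0.mod_add k 1 q), Nat.mul_1_l; reflexivity.
    + assert (H3q : (1 < 3 ^ q)%nat) by (apply Nat.pow_gt_1; lia).
      assert (0 < INR p) by (apply lt_0_INR; nia).
      assert (0 < INR (pow3_sum ds)) by (apply lt_0_INR; nia).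
      rewrite <- INR_pow3, Hblock3, Hblock, plus_INR, !mult_INR.
      simpl; field; nra.
Qed.

Local Close Scope R_scope.

Theorem theorem2p1 (p q : nat) :
  prime (Z.of_nat p) -> (3 < p)%nat -> mult_order 3 p q ->
  (cantor_prime p <->
   exists K : nat, sum_distinct_pow3_below K q /\ (2 * p * K + 1 = 3 ^ q)%nat).
Proof.
  intros Hprime _ [Hq [Hmod _]].
  split.
  - intros [_ Hcantor].
    destruct (cantor_inv_block p q Hq Hmod Hcantor) as [ds [Hnd [Hlt Hblock]]].
    exists (pow3_sum ds); split; [|lia].
    exists ds; repeat split; auto.
    intros ->; assert (1 < 3 ^ q) by (apply Nat.pow_gt_1; lia); simpl in Hblock; lia.
  - intros [K [[ds [_ [Hnd [Hlt ->]]]] HK]].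
    split; [exact Hprime|].
    apply (cantor_inv_of_block p q ds Hq Hnd Hlt); fold (pow3_sum ds) in HK; lia.
Qed.
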